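(* Let $\mathcal{A}=\{H_1,\dots,H_n\}$ be an arrangement of affine lines in $\mathbb{R}^2$, fix a flag $\mathcal{F}$ adapted to $\mathcal{A}$ and the associated numbering, chambers $C_0,\dots,C_n$, maps $\nabla_\eta$, bands, $\eta$-resonant bands, $\widetilde{\nabla}_\eta$ and $\widetilde{U}_1$ as described in the context. Let $R$ be a commutative ring, let $a_1,\dots,a_n\in R$ (i.e. $\eta=\sum_{i=1}^n a_ie_i\in A^1_R(\mathcal{A})$), and put $\alpha:=\sum_{i=1}^n a_i$. (i) If $\alpha$ is invertible in $R$, then $\widetilde{U}_1\colon \operatorname{Ker}(\widetilde{\nabla}_\eta)\to H^1(R[\mathsf{ch}_{\mathcal{F}}^\bullet(\mathcal{A})],\nabla_\eta)$ is injective. (ii) If $R$ is an integral domain and $\alpha$ is invertible in $R$, then $\widetilde{U}_1$ is an isomorphism. (iii) If $R$ is an arbitrary commutative ring, $\alpha$ is invertible in $R$, and every band of $\mathcal{A}$ is $\eta$-resonant, then $\widetilde{U}_1$ is an isomorphism.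
   Context: Chambers of $\mathcal{A}$ are the connected components of $\mathbb{R}^2\setminus\bigcup_i H_i$; for chambers $C,C'$, $\operatorname{Sep}(C,C')$ is the set of lines of $\mathcal{A}$ having $C$ and $C'$ on opposite sides. A flag $\mathcal{F}^0\subset\mathcal{F}^1\subset\mathbb{R}^2$ (a point in an oriented line) is adapted to $\mathcal{A}$ if: $\mathcal{F}^0$ lies on no $H_i$; $\mathcal{F}^1$ meets $\bigcup H_i$ in $n$ distinct points; $\mathcal{F}^0$ does not separate these $n$ points inside $\mathcal{F}^1$; and $\mathcal{F}^1$ does not separate the intersection points of lines of $\mathcal{A}$ (they all lie on one side of $\mathcal{F}^1$). Let $H_i^-$ be the open half plane of $H_i$ containing $\mathcal{F}^0$ and $H_i^+$ the other one; number the lines so that $\mathcal{F}^0<H_1\cap\mathcal{F}^1<\dots<H_n\cap\mathcal{F}^1$ along the oriented $\mathcal{F}^1$. Let $\mathsf{ch}^0_{\mathcal{F}}=\{C_0\}$ ($C_0$ the chamber containing $\mathcal{F}^0$), $\mathsf{ch}^1_{\mathcal{F}}=\{C_1,\dots,C_n\}$ the chambers meeting $\mathcal{F}^1$ but not $\mathcal{F}^0$, where $C_i=H_1^+\cap\dots\cap H_i^+\cap H_{i+1}^-\cap\dots\cap H_n^-$, and $\mathsf{ch}^2_{\mathcal{F}}$ the chambers not meeting $\mathcal{F}^1$. $R[\mathsf{ch}^i_{\mathcal{F}}]$ denotes the free $R$-module on $\mathsf{ch}^i_{\mathcal{F}}$. Define $\nabla_\eta\colon R[\mathsf{ch}^0_{\mathcal{F}}]\to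 R[\mathsf{ch}^1_{\mathcal{F}}]$ by $\nabla_\eta[C_0]=\sum_{i=1}^n(a_1+\dots+a_i)[C_i]$. Define $\deg(C_i,D)$ for $D\in\mathsf{ch}^2_{\mathcal{F}}$: for $i<n$, $\deg=1$ if $D\subset H_i^-\cap H_{i+1}^+$, $-1$ if $D\subset H_i^+\cap H_{i+1}^-$, $0$ otherwise; $\deg(C_n,D)=-1$ if $D\subset H_n^+$ and $0$ otherwise. Define $\nabla_\eta\colon R[\mathsf{ch}^1_{\mathcal{F}}]\to R[\mathsf{ch}^2_{\mathcal{F}}]$ by $\nabla_\eta[C]=\sum_{D}\deg(C,D)\big(\sum_{H_i\in\operatorname{Sep}(C,D)}a_i\big)[D]$. It is known that $(R[\mathsf{ch}^\bullet_{\mathcal{F}}],\nabla_\eta)$ is a cochain complex (isomorphic to the Aomoto complex $(A^\bullet_R(\mathcal{A}),\eta)$ of the Orlik–Solomon algebra); $H^1$ denotes its first cohomology. A band $B$ is the region between two parallel lines $H_i,H_{i+1}$ that are consecutive in the numbering. It contains exactly two unbounded chambers: $U_1(B)=C_i$ (meeting $\mathcal{F}^1$) and $U_2(B)\in\mathsf{ch}^2_{\mathcal{F}}$. $B$ is $\eta$-resonant if $\sum_{H_j\in\operatorname{Sep}(U_1(B),U_2(B))}a_j=0$; $\operatorname{RB}_\eta(\mathcal{A})$ is the set of $\eta$-resonant bands. Define $\widetilde{\nabla}_\eta\colon R[\operatorname{RB}_\eta(\mathcal{A})]\to R[\mathsf{ch}^2_{\mathcal{F}}]$ by $\widetilde{\nabla}_\eta[B]=-\nabla_\eta[U_1(B)]$,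 and $\widetilde{U}_1\colon\operatorname{Ker}(\widetilde{\nabla}_\eta)\to H^1(R[\mathsf{ch}^\bullet_{\mathcal{F}}],\nabla_\eta)$ by $\sum r_B[B]\mapsto$ the class of $\sum r_B[U_1(B)]$. *)

From HB Require Import structures.
From mathcomp Require Import all_boot all_order all_algebra.
From mathcomp Require Import boolp reals.
Set Implicit Arguments. Unset Strict Implicit. Unset Printing Implicit Defensive.
Import Order.TTheory GRing.Theory Num.Theory.
Local Open Scope ring_scope.

(* The arrangement H_1..H_n is given 0-based: lines L 0, ..., L (n-1).  *)

Definition pt (Rl : realType) := (Rl * Rl)%type.
Definition lineq (Rl : realType) := (Rl * Rl * Rl)%type.

Section Geometry.
Variable Rl : realType.

Definition evl (l : lineq Rl) (x : pt Rl) : Rl := l.1.1 * x.1 + l.1.2 * x.2 + l.2.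
Definition is_line (l : lineq Rl) : Prop := (l.1.1, l.1.2) != (0, 0).
Definition onH (l : lineq Rl) (x : pt Rl) : Prop := evl l x = 0.

(* The oriented line F^1 = { p + t v | t }, oriented by v; F^0 = p. *)
Definition onF1 (p v : pt Rl) (t : Rl) : pt Rl := (p.1 + t * v.1, p.2 + t * v.2).
(* A linear form vanishing exactly on F^1 (its two sides are g>0, g<0). *)
Definition gF1 (p v : pt Rl) (x : pt Rl) : Rl := v.2 * (x.1 - p.1) - v.1 * (x.2 - p.2).

Variables (n : nat) (L : nat -> lineq Rl) (p v : pt Rl).

(* The flag (p in the oriented line F^1) is adapted to the arrangement,
   and the lines are numbered so that F^0 < H_1 cap F^1 < ... < H_n cap F^1
   along the oriented F^1 (t j is the parameter of H_(j+1) cap F^1). *)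
Definition adapted : Prop :=
  [/\ v != (0, 0),
      (forall j, (j < n)%N -> is_line (L j)),
      (forall j, (j < n)%N -> evl (L j) p != 0),
      (exists t : nat -> Rl,
         [/\ (forall j s, (j < n)%N -> (onH (L j) (onF1 p v s) <-> s = t j)),
             (forall j k, (j < k)%N -> (k < n)%N -> t j < t k) &
             (forall j, (j < n)%N -> 0 < t j)]) &
      (forall j k x, (j < n)%N -> (k < n)%N -> j != k ->
         onH (L j) x -> onH (L k) x -> 0 < gF1 p v x) \/
      (forall j k x, (j < n)%N -> (k < n)%N -> j != k ->
         onH (L j) x -> onH (L k) x -> gF1 p v x < 0)].

(* H_j^+ : open half plane of H_j not containing F^0 = p;
   H_j^- : the one containing p. *)
Definition Hplus (j : nat) (x : pt Rl) : Prop := evl (L j) x * evl (L j) p < 0.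
Definition Hminus (j : nat) (x : pt Rl) : Prop := 0 < evl (L j) x * evl (L j) p.

(* Sign vectors: s_j = true means "on the H_j^+ side". *)
Definition sv := (n.-tuple bool).
Definition sg (s : sv) (j : nat) : bool := nth false s j.

Definition region (s : sv) (x : pt Rl) : Prop :=
  forall j, (j < n)%N -> if sg s j then Hplus j x else Hminus j x.

(* Chambers = connected components of the complement, represented by the
   (nonempty) cells they are, indexed by their sign vectors. *)
Definition chamber (s : sv) : Prop := exists x, region s x.
Definition meetsF1 (s : sv) : Prop := exists t, region s (onF1 p v t).
Definition meetsF0 (s : sv) : Prop := region s p.

Definition ch1 (s : sv) : Prop := [/\ chamber s, meetsF1 s & ~ meetsF0 s].
Definition ch2 (s : sv) : Prop := chamber s /\ ~ meetsF1 s.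

(* Cc k (k = 0..n-1) is the chamber C_(k+1) = H_1^+ .. H_(k+1)^+ H_(k+2)^- .. H_n^- *)
Definition Cc (k : nat) : sv := [tuple (i <= k)%N | i < n].

Definition parallel (l l' : lineq Rl) : Prop := ~ exists x, onH l x /\ onH l' x.
Definition is_band (k : nat) : Prop := (k.+1 < n)%N /\ parallel (L k) (L k.+1).
(* open strip between H_(k+1) and H_(k+2) (0-based lines k and k+1) *)
Definition inband (k : nat) (x : pt Rl) : Prop :=
  forall y z, onH (L k.+1) y -> onH (L k) z ->
    0 < evl (L k) x * evl (L k) y /\ 0 < evl (L k.+1) x * evl (L k.+1) z.
Definition unbounded (S : pt Rl -> Prop) : Prop :=
  forall M : Rl, exists x, S x /\ M < `|x.1| + `|x.2|.
(* U_2(B): the unbounded chamber of the band other than U_1(B) = C_(k+1). *)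
Definition isU2 (k : nat) (s : sv) : Prop :=
  [/\ chamber s, (forall x, region s x -> inband k x), unbounded (region s)
    & s != Cc k].
Definition U2 (k : nat) : sv := odflt (Cc k) [pick s : sv | `[< isU2 k s >] ].

(* R[ch^0] = R (free on {C_0});  R[ch^i] (i = 1, 2) = functions        *)
(* sv -> R supported on ch^i.                                          *)
Variables (R : comPzRingType) (a : nat -> R).  (* a j = a_(j+1) *)

Definition sepsum (C D : sv) : R := \sum_(j < n | sg C j != sg D j) a j.

Definition degk (k : nat) (D : sv) : R :=
  if (k.+1 < n)%N then
    (if ~~ sg D k && sg D k.+1 then 1
     else if sg D k && ~~ sg D k.+1 then -1 else 0)
  else (if sg D k then -1 else 0).

Definition degC (C D : sv) : R := \sum_(k < n) (C == Cc k)%:R * degk k D.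

Definition nabla0 (x : R) : sv -> R :=
  fun C => \sum_(k < n) (C == Cc k)%:R * (x * \sum_(j < n | (j <= k)%N) a j).

Definition nabla1 (c : sv -> R) : sv -> R :=
  fun D => if `[< ch2 D >] then
             \sum_(C : sv | `[< ch1 C >]) c C * degC C D * sepsum C D
           else 0.

Definition delta (C : sv) : sv -> R := fun D => (D == C)%:R.

Definition resonant (k : nat) : Prop := is_band k /\ sepsum (Cc k) (U2 k) = 0.

Definition nablat (k : nat) : sv -> R := fun D => - nabla1 (delta (Cc k)) D.

(* elements of R[RB_eta] are r : nat -> R supported on resonant bands *)
Definition inKer (r : nat -> R) : Prop :=
  (forall k, ~ resonant k -> r k = 0) /\
  (forall D, \sum_(k < n) r k * nablat k D = 0).

Definition U1t (r : nat -> R) : sv -> R :=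
  fun C => \sum_(k < n) r k * delta (Cc k) C.

Definition cochain1 (c : sv -> R) : Prop := forall C, ~ ch1 C -> c C = 0.
Definition cocycle1 (c : sv -> R) : Prop := cochain1 c /\ forall D, nabla1 c D = 0.
Definition cohom (c c' : sv -> R) : Prop :=
  exists x : R, forall C, c C - c' C = nabla0 x C.

Definition U1t_welldef : Prop := forall r, inKer r -> cocycle1 (U1t r).
Definition U1t_injective : Prop :=
  forall r r', inKer r -> inKer r' -> cohom (U1t r) (U1t r') -> forall k, r k = r' k.
Definition U1t_surjective : Prop :=
  forall c, cocycle1 c -> exists r, inKer r /\ cohom (U1t r) c.

End Geometry.

(* In the frame of F^1 and its normal pointing towards the vertices, H_j is the line
   s = t_j + mu_j y with 0 < t_1 < ... < t_n and mu_1 >= ... >= mu_n, and H_j is parallel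
   to H_(j+1) iff mu_j = mu_(j+1).  The chambers met by F^1 but not by F^0 are exactly the
   C_k, so 1-cochains are vectors (c_1, ..., c_n) and coboundaries are the multiples of
   (S_1, ..., S_n), S_k = a_1 + ... + a_k, where S_n = alpha is a unit.  Since C_n is never
   U_1 of a band, this gives injectivity.  For surjectivity, normalise a cocycle to c_n = 0.
   If H_k and H_(k+1) cross, the cocycle condition at the chamber beyond the crossing reads
   alpha c_k = c_n S_k, so c_k = 0; if they bound a band B, the condition at U_2(B) reads
   c_k * sum_(Sep(U_1(B), U_2(B))) a = 0.  Hence c is supported on resonant bands as soon as
   these sums are regular: in a domain, or when every band is resonant. *)

From HB Require Import structures.
From mathcomp Require Import all_boot all_order all_algebra.
From mathcomp Require Import boolp reals.
From mathcomp Require Import ring lra zify.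
Set Implicit Arguments. Unset Strict Implicit. Unset Printing Implicit Defensive.
Import Order.TTheory GRing.Theory Num.Theory.
Local Open Scope ring_scope.

Definition sv_of n (f : nat -> bool) : sv n := [tuple f i | i < n].

Lemma sg_sv_of n f j : (j < n)%N -> sg (sv_of n f) j = f j.
Proof. by move=> hj; rewrite /sg -[j]/(nat_of_ord (Ordinal hj)) nth_mktuple. Qed.

Lemma sg_Cc n k j : (j < n)%N -> sg (Cc n k) j = (j <= k)%N.
Proof. exact: (@sg_sv_of n (fun i => (i <= k)%N)). Qed.

Lemma sg_default n (s : sv n) j : (n <= j)%N -> sg s j = false.
Proof. by move=> hj; rewrite /sg nth_default // size_tuple. Qed.

Lemma eq_sv n (s s' : sv n) : (forall j, (j < n)%N -> sg s j = sg s' j) -> s = s'.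
Proof.
move=> h; apply/val_inj/(@eq_from_nth _ false); first by rewrite !size_tuple.
by rewrite size_tuple => j /h.
Qed.

Lemma Cc_inj n k m : (k < n)%N -> (m < n)%N -> Cc n k = Cc n m -> k = m.
Proof.
move=> hk hm e; have := congr1 (fun s => sg s k) e; have := congr1 (fun s => sg s m) e.
by rewrite !sg_Cc // !leqnn => hmk /esym hkm; apply/eqP; rewrite eqn_leq hkm hmk.
Qed.

Section PartialSums.
Variables (R : comPzRingType) (a : nat -> R) (n : nat).

Definition psum m := \sum_(0 <= j < m) a j.
Definition wsum (e : nat -> bool) m := \sum_(0 <= j < m) a j * (e j)%:R.

Lemma psumS m : psum m.+1 = psum m + a m.
Proof. by rewrite /psum big_nat_recr. Qed.

Lemma wsumS e m : wsum e m.+1 = wsum e m + a m * (e m)%:R.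
Proof. by rewrite /wsum big_nat_recr. Qed.

Lemma big_ord_ltn (F : nat -> R) m : (m <= n)%N ->
  \sum_(j < n | (j < m)%N) F j = \sum_(0 <= j < m) F j.
Proof. by move=> hm; rewrite (big_nat_widen 0 m n xpredT) // big_mkord. Qed.

Lemma sum_leq_psum k : (k < n)%N -> \sum_(j < n | (j <= k)%N) a j = psum k.+1.
Proof. exact: big_ord_ltn. Qed.

Lemma degkE (D : sv n) k : (k < n)%N ->
  degk R k D = (sg D k.+1)%:R - (sg D k)%:R.
Proof.
move=> hk; rewrite /degk; case: ifP => hk1; last first.
  have hn : (n <= k.+1)%N by rewrite leqNgt hk1.
  by rewrite (sg_default D hn); case: (sg D k) => /=; ring.
by case: (sg D k); case: (sg D k.+1); rewrite /= ?subrr ?sub0r ?subr0.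
Qed.

Lemma sepsum_CcE (D : sv n) k : (k < n)%N ->
  sepsum a (Cc n k) D = psum k.+1 + wsum (sg D) n - 2%:R * wsum (sg D) k.+1.
Proof.
move=> hk; rewrite /sepsum big_mkcond.
rewrite (eq_bigr (fun i : 'I_n => (if (i < k.+1)%N then a i else 0) + a i * (sg D i)%:R
           - 2%:R * (if (i < k.+1)%N then a i * (sg D i)%:R else 0))); last first.
  by move=> i _; rewrite sg_Cc // ltnS; case: (i <= k)%N; case: (sg D i) => /=; ring.
rewrite !big_split /= sumrN -mulr_sumr -!big_mkcond /=.
rewrite (big_ord_ltn a hk) (big_ord_ltn (fun i => a i * (sg D i)%:R) hk).
by rewrite /psum /wsum [\sum_(0 <= j < n) _]big_mkord.
Qed.

(* A potential for the summands of [sum_psum_degk_sepsum] (with [e := sg D],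
   [E := wsum e n]): they telescope along it. *)
Definition sep_potential (e : nat -> bool) (E : R) m :=
  (e m)%:R * (psum m * (psum m + E - 2%:R * wsum e m)) - (wsum e m * E - wsum e m ^+ 2).

Lemma sep_potentialS e E k :
  sep_potential e E k.+1 - sep_potential e E k =
  psum k.+1 * ((e k.+1)%:R - (e k)%:R) * (psum k.+1 + E - 2%:R * wsum e k.+1).
Proof.
rewrite /sep_potential !psumS !wsumS.
by case: (e k); rewrite ?mulr1n ?mulr0n; ring.
Qed.

Lemma sum_psum_degk_sepsum (D : sv n) :
  \sum_(k < n) (\sum_(j < n | (j <= k)%N) a j) * degk R k D * sepsum a (Cc n k) D = 0.
Proof.
pose f := sep_potential (sg D) (wsum (sg D) n).
rewrite (eq_bigr (fun k : 'I_n => f k.+1 - f k)); last first.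
  by move=> k _; rewrite sep_potentialS sum_leq_psum // degkE // sepsum_CcE.
rewrite -(big_mkord xpredT (fun k => f k.+1 - f k)) telescope_sumr //.
by rewrite /f /sep_potential (sg_default D (leqnn n)) mulr0n /psum /wsum !(big_geq (leqnn 0)); ring.
Qed.

End PartialSums.

Section ChamberSums.
Variables (R : comPzRingType) (a : nat -> R) (n : nat).

Lemma sum_leq_last : \sum_(j < n | (j <= n.-1)%N) a j = \sum_(j < n) a j.
Proof. by apply: eq_bigl => j; have := ltn_ord j; lia. Qed.

Lemma sum_ord_pick (F : nat -> R) m : (m < n)%N ->
  \sum_(k < n) F k * (m == k)%:R = F m.
Proof.
move=> hm; rewrite (bigD1 (Ordinal hm)) //= eqxx mulr1 big1 ?addr0 // => k hk.
by rewrite eq_sym -val_eqE /= in hk; rewrite (negbTE hk) mulr0.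
Qed.

Lemma eq_Cc m k : (m < n)%N -> (k < n)%N -> (Cc n m == Cc n k) = (m == k).
Proof. by move=> hm hk; apply/eqP/eqP => [/(Cc_inj hm hk)|->]. Qed.

Lemma sum_Cc_eq (F : nat -> R) m : (m < n)%N ->
  \sum_(k < n) (Cc n m == Cc n k)%:R * F k = F m.
Proof.
move=> hm; rewrite -[RHS](sum_ord_pick F hm).
by apply: eq_bigr => k _; rewrite eq_Cc // mulrC.
Qed.

Lemma nabla0_Cc x m : (m < n)%N ->
  nabla0 a x (Cc n m) = x * \sum_(j < n | (j <= m)%N) a j.
Proof. exact: (sum_Cc_eq (fun k => x * \sum_(j < n | (j <= k)%N) a j)). Qed.

Lemma U1t_Cc (r : nat -> R) m : (m < n)%N -> U1t r (Cc n m) = r m.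
Proof.
move=> hm; rewrite /U1t -[RHS](sum_Cc_eq r hm).
by apply: eq_bigr => k _; rewrite mulrC.
Qed.

Lemma degk_beyond k m : (k < n.-1)%N -> (m < n)%N ->
  degk R m (sv_of n (fun j => (k < j)%N)) = (k == m)%:R - (n.-1 == m)%:R.
Proof.
move=> hkn hm; rewrite degkE //; case: (ltnP m.+1 n) => hm1.
  rewrite !sg_sv_of // ltnS [n.-1 == m]eq_sym (ltn_eqF (etrans (ltn_predRL m n) hm1)) /=.
  by rewrite leq_eqVlt; case: ltngtP; rewrite /= ?subrr ?subr0.
have em : m = n.-1 by lia.
rewrite sg_default // sg_sv_of // em hkn eqxx (ltn_eqF hkn) /=; ring.
Qed.

Lemma nabla1D (Rl : realType) (L : nat -> lineq Rl) (p v : pt Rl) (c d : sv n -> R)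
    (D : sv n) :
  nabla1 L p v a (fun C => c C + d C) D = nabla1 L p v a c D + nabla1 L p v a d D.
Proof.
rewrite /nabla1; case: asboolP => _; last by rewrite addr0.
by rewrite -big_split; apply: eq_bigr => C _ /=; rewrite !mulrDl.
Qed.

Lemma U1t_injective_unit (Rl : realType) (L : nat -> lineq Rl) (p v : pt Rl) b :
  b * \sum_(j < n) a j = 1 -> U1t_injective n L p v a.
Proof.
move=> hb r r' [hr _] [hr' _] [x hx] k.
have nonres m : (n.-1 <= m)%N -> ~ resonant n L p a m by move=> hm [[hm1 _] _]; lia.
have [hk | hk] := ltnP k n; last by rewrite hr ?hr' //; apply: nonres; lia.
have hn1 : (n.-1 < n)%N by lia.
have hx0 : x = 0.
  have := hx (Cc n n.-1); rewrite !U1t_Cc // nabla0_Cc // sum_leq_last.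
  rewrite hr ?hr' ?subrr; [|exact: nonres..].
  by move=> h; rewrite -[x]mulr1 -hb mulrCA -h mulr0.
by move/eqP: (hx (Cc n k)); rewrite !U1t_Cc // nabla0_Cc // hx0 mul0r subr_eq0 => /eqP.
Qed.

End ChamberSums.

Section Frame.
Variables (Rl : realType) (n : nat) (L : nat -> lineq Rl) (p v : pt Rl)
  (t : nat -> Rl) (sig : Rl).
Hypothesis hv : v != (0, 0).
Hypothesis hE : forall j, (j < n)%N -> evl (L j) p != 0.
Hypothesis ht_onH : forall j s, (j < n)%N -> (onH (L j) (onF1 p v s) <-> s = t j).
Hypothesis ht_lt : forall j k, (j < k)%N -> (k < n)%N -> t j < t k.
Hypothesis ht_gt0 : forall j, (j < n)%N -> 0 < t j.
Hypothesis hsig : sig = 1 \/ sig = -1.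
Hypothesis hvertex : forall j k x, (j < n)%N -> (k < n)%N -> j != k ->
  onH (L j) x -> onH (L k) x -> 0 < sig * gF1 p v x.

(* [vperp] is the normal of F^1 pointing towards the vertices of the arrangement;
   in the frame [(s, y)] of [frame] the line H_(j+1) is [s = t j + slope j * y]. *)
Definition vperp : pt Rl := (sig * v.2, - (sig * v.1)).
Definition frame (s y : Rl) : pt Rl :=
  (p.1 + s * v.1 + y * vperp.1, p.2 + s * v.2 + y * vperp.2).
Definition ev0 j := evl (L j) p.
Definition dv j := (L j).1.1 * v.1 + (L j).1.2 * v.2.
Definition dvperp j := (L j).1.1 * vperp.1 + (L j).1.2 * vperp.2.
Definition slope j := dvperp j * t j / ev0 j.
Definition normv2 := v.1 ^+ 2 + v.2 ^+ 2.

Lemma normv2_gt0 : 0 < normv2.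
Proof.
move: hv; rewrite /normv2; case: v => v1 v2 /=; rewrite xpair_eqE negb_and.
by case/orP => h; [have := sqr_ge0 v2; have : 0 < v1 ^+ 2 by rewrite exprn_even_gt0
                  | have := sqr_ge0 v1; have : 0 < v2 ^+ 2 by rewrite exprn_even_gt0]; lra.
Qed.

Lemma evl_frame j s y : evl (L j) (frame s y) = ev0 j + s * dv j + y * dvperp j.
Proof. by rewrite /ev0 /frame /dv /dvperp /evl /=; ring. Qed.

Lemma onF1_frame s : onF1 p v s = frame s 0.
Proof. by rewrite /onF1 /frame !mul0r !addr0. Qed.

Lemma frame_surj x : exists s y, x = frame s y.
Proof.
have hN0 : normv2 != 0 by rewrite gt_eqF // normv2_gt0.
exists (((x.1 - p.1) * v.1 + (x.2 - p.2) * v.2) / normv2).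
exists (sig * ((x.1 - p.1) * v.2 - (x.2 - p.2) * v.1) / normv2).
move: hN0; rewrite /frame /vperp /normv2.
case: x => x1 x2; case: p => p1 p2; case: v => v1 v2 /= hN0.
by case: hsig => ->; congr pair; field.
Qed.

Lemma gF1_frame s y : sig * gF1 p v (frame s y) = y * normv2.
Proof. by rewrite /gF1 /frame /vperp /normv2 /=; case: hsig => ->; ring. Qed.

Lemma t_neq0 j : (j < n)%N -> t j != 0.
Proof. by move=> hj; rewrite gt_eqF // ht_gt0. Qed.

Lemma t_le i j : (i <= j)%N -> (j < n)%N -> t i <= t j.
Proof. by rewrite leq_eqVlt => /orP[/eqP -> //|hij] hj; apply/ltW/ht_lt. Qed.

Lemma dvE j : (j < n)%N -> dv j = - ev0 j / t j.
Proof.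
move=> hj; have := (ht_onH (t j) hj).2 erefl.
rewrite /onH onF1_frame evl_frame mul0r addr0 => h.
have e : t j * dv j = - ev0 j by lra.
by rewrite -e mulrAC mulfV ?t_neq0 // mul1r.
Qed.

Lemma evl_frame_ev0 j s y : (j < n)%N ->
  evl (L j) (frame s y) * ev0 j = (ev0 j ^+ 2 / t j) * (t j + slope j * y - s).
Proof.
move=> hj; rewrite evl_frame (dvE hj) /slope; field.
by rewrite t_neq0 // hE.
Qed.

Lemma ev0_coef_gt0 j : (j < n)%N -> 0 < ev0 j ^+ 2 / t j.
Proof. by move=> hj; rewrite divr_gt0 ?ht_gt0 // exprn_even_gt0 // hE. Qed.

Lemma Hplus_frame j s y : (j < n)%N -> Hplus L p j (frame s y) <-> t j + slope j * y < s.
Proof.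
move=> hj; rewrite /Hplus -/(ev0 j) evl_frame_ev0 // pmulr_rlt0 ?ev0_coef_gt0 //.
by rewrite subr_lt0.
Qed.

Lemma Hminus_frame j s y : (j < n)%N -> Hminus L p j (frame s y) <-> s < t j + slope j * y.
Proof.
move=> hj; rewrite /Hminus -/(ev0 j) evl_frame_ev0 // pmulr_rgt0 ?ev0_coef_gt0 //.
by rewrite subr_gt0.
Qed.

Lemma onH_frame j s y : (j < n)%N -> onH (L j) (frame s y) <-> s = t j + slope j * y.
Proof.
move=> hj; have hc := ev0_coef_gt0 hj; have hE0 := hE hj.
rewrite /onH; split => [h | ->].
  move/eqP: (evl_frame_ev0 s y hj); rewrite h mul0r eq_sym mulf_eq0 gt_eqF //=.
  by rewrite subr_eq0 => /eqP.
move/eqP: (evl_frame_ev0 (t j + slope j * y) y hj).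
by rewrite subrr mulr0 mulf_eq0 (negbTE hE0) orbF => /eqP.
Qed.

Lemma onH_frame_line i j y : (j < n)%N ->
  onH (L j) (frame (t i + slope i * y) y) <-> y * (slope i - slope j) = t j - t i.
Proof. by move=> hj; rewrite onH_frame //; split => h; lra. Qed.

Lemma slope_noninc i j : (i < j)%N -> (j < n)%N -> slope j <= slope i.
Proof.
move=> hij hj; have hi := ltn_trans hij hj; rewrite leNgt; apply/negP => hlt.
have hd : slope i - slope j < 0 by rewrite subr_lt0.
set y := (t j - t i) / (slope i - slope j).
have ey : y * (slope i - slope j) = t j - t i by rewrite /y mulfVK ?lt_eqF.
have hy : y < 0 by have := ht_lt hij hj; nra.
have hHi : onH (L i) (frame (t i + slope i * y) y).
  by apply/(onH_frame_line i y hi); rewrite !subrr mulr0.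
have := hvertex hi hj (negbT (ltn_eqF hij)) hHi ((onH_frame_line i y hj).2 ey).
by rewrite gF1_frame; have := normv2_gt0; nra.
Qed.

Lemma parallel_slope i j : (i < j)%N -> (j < n)%N ->
  parallel (L i) (L j) <-> slope i = slope j.
Proof.
move=> hij hj; have hi := ltn_trans hij hj; have tij := ht_lt hij hj.
split => [hpar | hs [x [hxi hxj]]].
  apply/eqP/negP => /negP hne; apply: hpar.
  have hd : slope i - slope j != 0 by rewrite subr_eq0.
  set y := (t j - t i) / (slope i - slope j).
  exists (frame (t i + slope i * y) y); split.
    by apply/(onH_frame_line i y hi); rewrite !subrr mulr0.
  by apply/(onH_frame_line i y hj); rewrite /y mulfVK.
have [s [y ex]] := frame_surj x.
by move: hxi hxj; rewrite ex !onH_frame // hs; lra.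
Qed.

Lemma region_uniq (s s' : sv n) x : region L p s x -> region L p s' x -> s = s'.
Proof.
move=> h h'; apply: eq_sv => j hj; have := h j hj; have := h' j hj.
by rewrite /Hplus /Hminus; case: (sg s j); case: (sg s' j) => // a b; lra.
Qed.

Lemma sg_region (s : sv n) x j : region L p s x -> (j < n)%N ->
  (Hplus L p j x -> sg s j) /\ (Hminus L p j x -> ~~ sg s j).
Proof.
move=> h hj; have := h j hj; rewrite /Hplus /Hminus.
by case: (sg s j) => b; split => // c; lra.
Qed.

Lemma sg_meetsF1 (C : sv n) s0 : region L p C (onF1 p v s0) ->
  forall j, (j < n)%N -> sg C j = (t j < s0).
Proof.
rewrite onF1_frame => h j hj; have := h j hj.
case: (sg C j); first by rewrite Hplus_frame // mulr0 addr0 => ->.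
by rewrite Hminus_frame // mulr0 addr0 => hl; apply/esym/negbTE; rewrite -leNgt ltW.
Qed.

Lemma meetsF1_Cc (C : sv n) : meetsF1 L p v C ->
  (forall j, (j < n)%N -> ~~ sg C j) \/ exists2 k, (k < n)%N & C = Cc n k.
Proof.
case=> s0 /sg_meetsF1 hs.
have [[j /andP[hj hl]] | nex] := pselect (exists j, (j < n)%N && (t j < s0)); last first.
  by left => j hj; rewrite hs //; apply/negP => hl; apply: nex; exists j; rewrite hj.
right; have ub i : (i < n)%N && (t i < s0) -> (i <= n)%N by case/andP => /ltnW.
have [k /andP[hk hkl] hmax] := ex_maxnP (ex_intro _ j (introT andP (conj hj hl))) ub.
exists k => //; apply: eq_sv => i hi; rewrite hs // sg_Cc //.
case: (leqP i k) => hik; first exact: le_lt_trans (t_le hik hk) hkl.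
by apply/negbTE/negP => hl'; have := hmax i; rewrite hi hl' leqNgt hik => /(_ isT).
Qed.

Lemma ev0_sq_gt0 j : (j < n)%N -> 0 < ev0 j * ev0 j.
Proof. by move=> hj; rewrite -expr2 exprn_even_gt0 // hE. Qed.

Lemma ch1_Cc k : (k < n)%N -> ch1 L p v (Cc n k).
Proof.
move=> hk; have hn : (0 < n)%N := leq_ltn_trans (leq0n k) hk.
pose s0 := if (k.+1 < n)%N then (t k + t k.+1) / 2%:R else t k + 1.
have hr : region L p (Cc n k) (onF1 p v s0).
  move=> j hj; rewrite sg_Cc // onF1_frame; case: (leqP j k) => hjk.
    rewrite Hplus_frame // mulr0 addr0; have := t_le hjk hk.
    rewrite /s0; case: ifP => hk1; last by lra.
    by have := ht_lt (ltnSn k) hk1; lra.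
  have hk1 : (k.+1 < n)%N := leq_ltn_trans hjk hj.
  rewrite Hminus_frame // mulr0 addr0 /s0 hk1.
  by have := t_le hjk hj; have := ht_lt (ltnSn k) hk1; lra.
split; [by exists (onF1 p v s0) | by exists s0 | move=> hF0].
by have := hF0 0%N hn; rewrite sg_Cc //= /Hplus; have := ev0_sq_gt0 hn; rewrite /ev0; lra.
Qed.

Lemma ch1P (C : sv n) : ch1 L p v C <-> exists2 k, (k < n)%N & C = Cc n k.
Proof.
split => [[_ /meetsF1_Cc [hall|//] hF0] | [k hk ->]]; last exact: ch1_Cc.
by exfalso; apply: hF0 => j hj; rewrite (negbTE (hall j hj)) /Hminus ev0_sq_gt0.
Qed.

(* For non-parallel consecutive lines, the chamber beyond their crossing point. *)
Lemma ch2_beyond k : (k.+1 < n)%N -> slope k.+1 < slope k ->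
  ch2 L p v (sv_of n (fun j => (k < j)%N)).
Proof.
move=> hk1 hlt; have hk := ltn_trans (ltnSn k) hk1.
have hn0 : (0 < n)%N := leq_ltn_trans (leq0n k) hk.
have hn : (n.-1 < n)%N by rewrite prednK.
set T := t n.-1; have hT : 0 < T := ht_gt0 hn.
set Y := (T + 1) / (slope k - slope k.+1).
have eY : Y * (slope k - slope k.+1) = T + 1 by rewrite /Y mulfVK // gt_eqF // subr_gt0.
have hY : 0 <= Y by rewrite /Y divr_ge0 // ?subr_ge0 ltW //; lra.
split.
  exists (frame (T + slope k.+1 * Y + 1 / 2%:R) Y) => j hj; rewrite sg_sv_of //.
  case: (ltnP k j) => hkj.
    rewrite Hplus_frame //.
    have h1 : t j <= T by apply: t_le => //; rewrite -ltnS prednK.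
    have h2 : slope j * Y <= slope k.+1 * Y.
      by apply: ler_wpM2r => //; move: hkj; rewrite leq_eqVlt => /orP[/eqP->|/slope_noninc->].
    lra.
  rewrite Hminus_frame //.
  have h1 : slope k * Y <= slope j * Y.
    by apply: ler_wpM2r => //; move: hkj; rewrite leq_eqVlt => /orP[/eqP->|/slope_noninc->].
  by have := ht_gt0 hj; lra.
case/meetsF1_Cc => [hall | [m hm hD]].
  by have := hall n.-1 hn; rewrite sg_sv_of // -ltnS prednK ?hk1.
by have := congr1 (fun s => sg s 0) hD; rewrite sg_sv_of ?sg_Cc.
Qed.

Lemma normv1_gt0 : 0 < `|v.1| + `|v.2|.
Proof.
move: hv; case: v => v1 v2 /=; rewrite xpair_eqE negb_and.
by case/orP => h; [have := normr_ge0 v2; have : 0 < `|v1| by rewrite normr_gt0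
                  | have := normr_ge0 v1; have : 0 < `|v2| by rewrite normr_gt0]; lra.
Qed.

Lemma norm_frame s y : 0 < y -> `|(frame s y).1| + `|(frame s y).2| <=
  `|p.1| + `|p.2| + (`|s| + y) * (`|v.1| + `|v.2|).
Proof.
move=> hy; rewrite /frame /vperp /=.
have hsig1 : `|sig| = 1 by case: hsig => ->; rewrite ?normrN normr1.
have e1 : `|y * (sig * v.2)| = y * `|v.2| by rewrite !normrM hsig1 mul1r gtr0_norm.
have e2 : `|y * - (sig * v.1)| = y * `|v.1|.
  by rewrite normrM normrN normrM hsig1 mul1r gtr0_norm.
have := ler_normD (p.1 + s * v.1) (y * (sig * v.2)); have := ler_normD p.1 (s * v.1).
have := ler_normD (p.2 + s * v.2) (y * - (sig * v.1)); have := ler_normD p.2 (s * v.2).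
by rewrite e1 e2 !normrM; lra.
Qed.

Section SecondUnboundedChamber.
Variables (k : nat) (s : sv n).
Hypothesis hk1 : (k.+1 < n)%N.
Hypothesis hslope : slope k = slope k.+1.
Hypothesis hU2 : isU2 L p k s.

Let hk : (k < n)%N := ltn_trans (ltnSn k) hk1.

Lemma sg_U2_band : sg s k /\ ~~ sg s k.+1.
Proof.
have [[x0 hx0] hin _ _] := hU2.
have hHk1 : onH (L k.+1) (frame (t k.+1) 0) by rewrite onH_frame // mulr0 addr0.
have hHk : onH (L k) (frame (t k) 0) by rewrite onH_frame // mulr0 addr0.
have [h1 h2] := hin x0 hx0 _ _ hHk1 hHk.
have tk := ht_lt (ltnSn k) hk1.
have : Hplus L p k (frame (t k.+1) 0) by rewrite Hplus_frame // mulr0 addr0.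
have : Hminus L p k.+1 (frame (t k) 0) by rewrite Hminus_frame // mulr0 addr0.
rewrite /Hplus /Hminus => hm hp; split.
  by apply: (sg_region hx0 hk).1; rewrite /Hplus; nra.
by apply: (sg_region hx0 hk1).2; rewrite /Hminus; nra.
Qed.

Lemma U2_strip s' y : region L p s (frame s' y) ->
  t k + slope k * y < s' /\ s' < t k.+1 + slope k * y.
Proof.
move=> hr; have [sk sk1] := sg_U2_band; have := hr k hk; have := hr k.+1 hk1.
by rewrite sk (negbTE sk1) Hplus_frame // Hminus_frame // hslope.
Qed.

(* On the side of F^1 away from the vertices the strip lies in the chamber [Cc n k]. *)
Lemma U2_above s' y : region L p s (frame s' y) -> 0 < y.
Proof.
move=> hr; rewrite ltNge; apply/negP => hy; have [hs1 hs2] := U2_strip hr.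
have [_ _ _ /eqP []] := hU2; apply: (region_uniq hr) => j hj; rewrite sg_Cc //.
case: (leqP j k) => hjk.
  rewrite Hplus_frame //; have := t_le hjk hk.
  have : slope k <= slope j by move: hjk; rewrite leq_eqVlt => /orP[/eqP->|/slope_noninc->].
  by nra.
rewrite Hminus_frame //; have := t_le hjk hj.
have : slope j <= slope k.
  by rewrite hslope; move: hjk; rewrite leq_eqVlt => /orP[/eqP<-|/slope_noninc->].
by nra.
Qed.

Lemma U2_far Y : exists s' y, region L p s (frame s' y) /\ Y <= y.
Proof.
have [_ _ hunb _] := hU2; set V := `|v.1| + `|v.2|; have hV : 0 < V := normv1_gt0.
set W := V * (`|slope k| + 1).
have hW : 0 < W by rewrite mulr_gt0 // ltr_wpDl.
have [x [hx hM]] := hunb (`|p.1| + `|p.2| + V * t k.+1 + W * Y).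
have [s' [y ex]] := frame_surj x; rewrite ex in hx hM; exists s', y; split => //.
have hy := U2_above hx; have [hs1 hs2] := U2_strip hx.
have hnb := norm_frame s' hy.
have hsn : `|s'| <= t k.+1 + `|slope k| * y.
  have := ht_gt0 hk; have := ler_norm (slope k); have := ler_norm (- slope k).
  by rewrite normrN ler_norml; nra.
rewrite -(ler_pM2l hW); have : `|s'| * V <= (t k.+1 + `|slope k| * y) * V.
  by rewrite ler_wpM2r // ltW.
by move=> hsV; apply/ltW; move: hM hnb hsV; rewrite /W /V; lra.
Qed.

Lemma U2_far_from j (c : Rl) : slope j != slope k ->
  exists s' y, region L p s (frame s' y) /\ c <= `|slope j - slope k| * y.
Proof.
move=> hne; have hd : 0 < `|slope j - slope k| by rewrite normr_gt0 subr_eq0.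
have [s' [y [hr hY]]] := U2_far (c / `|slope j - slope k|); exists s', y; split => //.
by rewrite -[c](divfK (lt0r_neq0 hd)) mulrC ler_wpM2l // ltW.
Qed.

Lemma sg_U2 j : (j < n)%N ->
  sg s j = if slope j == slope k then (j <= k)%N else slope j < slope k.
Proof.
move=> hj; case: eqVneq => [hjk | hne].
  have [s' [y [hr _]]] := U2_far 0; have [hs1 hs2] := U2_strip hr.
  case: (leqP j k) => hjk'.
    by apply: (sg_region hr hj).1; rewrite Hplus_frame // hjk; have := t_le hjk' hk; lra.
  apply/negbTE/(sg_region hr hj).2; rewrite Hminus_frame // hjk.
  by have := t_le hjk' hj; lra.
case: ltgtP hne => // hlt _.
  have [s' [y [hr hY]]] := U2_far_from (t j + 1) (negbT (lt_eqF hlt)).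
  have [hs1 _] := U2_strip hr; have := ht_gt0 hk => htk.
  apply: (sg_region hr hj).1; rewrite Hplus_frame //.
  by move: hY; rewrite ltr0_norm ?subr_lt0 //; nra.
have [s' [y [hr hY]]] := U2_far_from (t k.+1 + 1) (negbT (gt_eqF hlt)).
have [_ hs2] := U2_strip hr; have := ht_gt0 hj => htj.
apply/negbTE/(sg_region hr hj).2; rewrite Hminus_frame //.
by move: hY; rewrite gtr0_norm ?subr_gt0 //; nra.
Qed.

Lemma ch2_U2 : ch2 L p v s.
Proof.
have [[x0 hx0] _ _ hneq] := hU2; have [sk sk1] := sg_U2_band.
split; first by exists x0.
case/meetsF1_Cc => [hall | [m hm hD]]; first by have := hall k hk; rewrite sk.
move: sk sk1 hneq; rewrite hD !sg_Cc // => hkm hmk.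
suff -> : m = k by rewrite eqxx.
by apply/eqP; rewrite eqn_leq leqNgt hmk hkm.
Qed.

End SecondUnboundedChamber.

Section Cochains.
Variables (R : comPzRingType) (a : nat -> R).

Lemma sum_Cc_out (F : nat -> R) (C : sv n) : ~ ch1 L p v C ->
  \sum_(k < n) (C == Cc n k)%:R * F k = 0.
Proof.
move=> hC; rewrite big1 // => k _; case: eqP => [e|_]; last by rewrite mul0r.
by case: hC; apply/ch1P; exists k.
Qed.

Lemma nabla0_out x (C : sv n) : ~ ch1 L p v C -> nabla0 a x C = 0.
Proof. exact: (sum_Cc_out (fun k => x * \sum_(j < n | (j <= k)%N) a j)). Qed.

Lemma U1t_out (r : nat -> R) (C : sv n) : ~ ch1 L p v C -> U1t r C = 0.
Proof.
move=> hC; rewrite /U1t -[RHS](sum_Cc_out r hC).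
by apply: eq_bigr => k _; rewrite mulrC.
Qed.

Lemma nabla1E (c : sv n -> R) (D : sv n) : ch2 L p v D ->
  nabla1 L p v a c D = \sum_(k < n) c (Cc n k) * degk R k D * sepsum a (Cc n k) D.
Proof.
move=> hD; rewrite /nabla1 asboolT // /degC.
rewrite (eq_bigr (fun C =>
  \sum_(k < n) c C * ((C == Cc n k)%:R * degk R k D) * sepsum a C D)); last first.
  by move=> C _; rewrite [c C * _]mulr_sumr mulr_suml.
rewrite exchange_big /=; apply: eq_bigr => k _.
rewrite (bigD1 (Cc n k)) /=; last exact/asboolP/ch1_Cc.
rewrite eqxx /= mul1r big1 ?addr0 // => C /andP[_ /negbTE ->].
by rewrite mul0r mulr0 mul0r.
Qed.

Lemma nabla1_out (c : sv n -> R) (D : sv n) : ~ ch2 L p v D -> nabla1 L p v a c D = 0.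
Proof. by move=> hD; rewrite /nabla1 asboolF. Qed.

Lemma nabla1_nabla0 x (D : sv n) : nabla1 L p v a (nabla0 a x) D = 0.
Proof.
have [hD | /nabla1_out //] := pselect (ch2 L p v D).
rewrite nabla1E // (eq_bigr (fun k : 'I_n => x * ((\sum_(j < n | (j <= k)%N) a j) *
  degk R k D * sepsum a (Cc n k) D))) => [|k _]; last by rewrite nabla0_Cc // !mulrA.
by rewrite -mulr_sumr sum_psum_degk_sepsum mulr0.
Qed.

Lemma nabla1_delta k (D : sv n) : (k < n)%N -> ch2 L p v D ->
  nabla1 L p v a (delta R (Cc n k)) D = degk R k D * sepsum a (Cc n k) D.
Proof.
move=> hk hD; rewrite nabla1E //.
rewrite -[RHS](sum_Cc_eq (fun m => degk R m D * sepsum a (Cc n m) D) hk).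
by apply: eq_bigr => m _; rewrite /delta eq_sym mulrA.
Qed.

Lemma nabla1_U1t (r : nat -> R) (D : sv n) :
  nabla1 L p v a (U1t r) D = - \sum_(k < n) r k * nablat L p v a k D.
Proof.
rewrite -sumrN; have [hD | hD] := pselect (ch2 L p v D); last first.
  by rewrite nabla1_out // big1 // => k _; rewrite /nablat nabla1_out // oppr0 mulr0 oppr0.
rewrite nabla1E //; apply: eq_bigr => k _.
by rewrite U1t_Cc // /nablat nabla1_delta // mulrN opprK mulrA.
Qed.

Lemma cocycle_beyond (c : sv n -> R) k : cocycle1 L p v a c -> (k.+1 < n)%N ->
  slope k.+1 < slope k ->
  (\sum_(j < n) a j) * c (Cc n k) = c (Cc n n.-1) * \sum_(j < n | (j <= k)%N) a j.
Proof.
move=> [_ hc] hk1 hlt; have hkn : (k < n.-1)%N by rewrite ltn_predRL.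
have hk : (k < n)%N by lia.
have hn1 : (n.-1 < n)%N by lia.
set D := sv_of n (fun j => (k < j)%N).
have sepk : sepsum a (Cc n k) D = \sum_(j < n) a j.
  by apply: eq_bigl => j; rewrite sg_Cc // sg_sv_of // ltnNge; case: (j <= k)%N.
have sepn : sepsum a (Cc n n.-1) D = \sum_(j < n | (j <= k)%N) a j.
  apply: eq_bigl => j; rewrite sg_Cc // sg_sv_of // ltnNge.
  have -> : (j <= n.-1)%N by have := ltn_ord j; lia.
  by case: (j <= k)%N.
have := hc D; rewrite (nabla1E _ (ch2_beyond hk1 hlt)).
under eq_bigr => m _ do rewrite degk_beyond // mulrAC mulrBr.
rewrite sumrB !(sum_ord_pick (fun m => c (Cc n m) * sepsum a (Cc n m) D)) // sepk sepn.
by move/eqP; rewrite subr_eq0 mulrC => /eqP.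
Qed.

Lemma cocycle_nonband b (f : sv n -> R) m : b * \sum_(j < n) a j = 1 ->
  cocycle1 L p v a f -> f (Cc n n.-1) = 0 -> (m < n)%N -> ~ is_band n L m ->
  f (Cc n m) = 0.
Proof.
move=> hb hf hlast hm hnb; have [hm1 | hmn] := ltnP m.+1 n; last first.
  by have -> : m = n.-1 by lia.
have hlt : slope m.+1 < slope m.
  rewrite lt_neqAle slope_noninc // andbT; apply/eqP => hs; apply: hnb.
  by split => //; apply/(parallel_slope (ltnSn m) hm1).
by rewrite -[f _]mul1r -hb -mulrA cocycle_beyond // hlast !mul0r mulr0.
Qed.

Lemma cocycle_U2 (f : sv n -> R) k s : cocycle1 L p v a f ->
  (forall m, (m < n)%N -> ~ is_band n L m -> f (Cc n m) = 0) ->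
  is_band n L k -> isU2 L p k s -> f (Cc n k) * sepsum a (Cc n k) s = 0.
Proof.
move=> [_ hf] hnb [hk1 hpar] hU; have hk : (k < n)%N by lia.
have hsl := (parallel_slope (ltnSn k) hk1).1 hpar.
have := hf s; rewrite (nabla1E _ (ch2_U2 hk1 hU)) (bigD1 (Ordinal hk)) //=.
rewrite big1 ?addr0 => [|m hmk].
  rewrite degkE // !(sg_U2 hk1 hsl hU) // -hsl !eqxx leqnn ltnn mulr0n mulr1n.
  by rewrite sub0r mulrN1 mulNr => /eqP; rewrite oppr_eq0 => /eqP.
have [[hm1 hparm] | hnband] := pselect (is_band n L m); last by rewrite hnb // !mul0r.
have hslm := (parallel_slope (ltnSn m) hm1).1 hparm.
rewrite degkE // !(sg_U2 hk1 hsl hU) // -hslm; case: eqP => _.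
  have hne : (m : nat) != k by [].
  by rewrite [(m <= k)%N]leq_eqVlt (negbTE hne) subrr mulr0 mul0r.
by rewrite subrr mulr0 mul0r.
Qed.

Lemma cocycle_band (f : sv n -> R) k : cocycle1 L p v a f ->
  (forall m, (m < n)%N -> ~ is_band n L m -> f (Cc n m) = 0) ->
  is_band n L k -> f (Cc n k) * sepsum a (Cc n k) (U2 n L p k) = 0.
Proof.
move=> hf hnb hk; rewrite /U2; case: pickP => [s /asboolP | _] /=.
  exact: cocycle_U2.
(* Otherwise [U2] falls back to [Cc n k], and the separating set is empty. *)
by rewrite /sepsum big_pred0 ?mulr0 // => j; rewrite eqxx.
Qed.

Lemma U1t_welldef_frame : U1t_welldef n L p v a.
Proof.
move=> r [_ hker]; split => [C | D]; first exact: U1t_out.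
by rewrite nabla1_U1t hker oppr0.
Qed.

Lemma U1t_surjective_frame b : b * \sum_(j < n) a j = 1 ->
  (forall k, is_band n L k -> ~ resonant n L p a k ->
     GRing.rreg (sepsum a (Cc n k) (U2 n L p k))) ->
  U1t_surjective n L p v a.
Proof.
move=> hb hreg c [hcc hcn].
(* Subtracting a coboundary normalises [c] to vanish on the last chamber [C_n]. *)
set x := - (b * c (Cc n n.-1)); set f := fun C => c C + nabla0 a x C.
have hf : cocycle1 L p v a f.
  split => [C hC | D]; first by rewrite /f hcc // nabla0_out ?addr0.
  by rewrite nabla1D hcn nabla1_nabla0 addr0.
have hlast : f (Cc n n.-1) = 0.
  have [n0 | hn] := posnP n; first by rewrite hf.1 // => /ch1P [k]; rewrite n0.
  rewrite /f nabla0_Cc ?sum_leq_last; last by lia.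
  by rewrite /x mulNr -mulrA mulrCA hb mulr1 subrr.
have hnb m : (m < n)%N -> ~ is_band n L m -> f (Cc n m) = 0.
  exact: cocycle_nonband hb hf hlast.
pose r k := if (k < n)%N then f (Cc n k) else 0.
have hU1t : U1t r = f.
  apply: funext => C; have [/ch1P [m hm ->] | hC] := pselect (ch1 L p v C).
    by rewrite U1t_Cc // /r hm.
  by rewrite U1t_out // hf.1.
exists r; split; last by exists x => C; rewrite hU1t /f addrAC subrr add0r.
split=> [k hk | D]; last first.
  by apply/eqP; rewrite -oppr_eq0 -nabla1_U1t hU1t hf.2.
rewrite /r; case: ltnP => // hkn.
have [hband | hnband] := pselect (is_band n L k); last exact: hnb.
by apply: (hreg k hband hk); rewrite cocycle_band // mul0r.
Qed.

End Cochains.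

End Frame.

Lemma vertex_side_sign (Rl : realType) n (L : nat -> lineq Rl) p v :
  (forall j k x, (j < n)%N -> (k < n)%N -> j != k ->
     onH (L j) x -> onH (L k) x -> 0 < gF1 p v x) \/
  (forall j k x, (j < n)%N -> (k < n)%N -> j != k ->
     onH (L j) x -> onH (L k) x -> gF1 p v x < 0) ->
  exists2 sig : Rl, sig = 1 \/ sig = -1 &
    forall j k x, (j < n)%N -> (k < n)%N -> j != k ->
      onH (L j) x -> onH (L k) x -> 0 < sig * gF1 p v x.
Proof.
case=> h; [exists 1; first by left | exists (-1); first by right].
  by move=> j k x hj hk hjk hxj hxk; rewrite mul1r (h j k).
by move=> j k x hj hk hjk hxj hxk; rewrite mulN1r oppr_gt0 (h j k).
Qed.

Lemma U1t_welldef_adapted (Rl : realType) n (L : nat -> lineq Rl) p v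
    (R : comPzRingType) (a : nat -> R) :
  adapted n L p v -> U1t_welldef n L p v a.
Proof.
case=> _ _ hE [t [ht_onH ht_lt ht_gt0]] /vertex_side_sign [sig _ _].
exact: (U1t_welldef_frame sig hE ht_onH ht_lt ht_gt0).
Qed.

Lemma U1t_surjective_adapted (Rl : realType) n (L : nat -> lineq Rl) p v
    (R : comPzRingType) (a : nat -> R) b :
  adapted n L p v -> b * \sum_(j < n) a j = 1 ->
  (forall k, is_band n L k -> ~ resonant n L p a k ->
     GRing.rreg (sepsum a (Cc n k) (U2 n L p k))) ->
  U1t_surjective n L p v a.
Proof.
case=> hv _ hE [t [ht_onH ht_lt ht_gt0]] /vertex_side_sign [sig hsig hvertex].
exact: (U1t_surjective_frame hv hE ht_onH ht_lt ht_gt0 hsig hvertex).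
Qed.

Theorem theorem4p8 (Rl : realType) (n : nat) (L : nat -> lineq Rl) (p v : pt Rl)
  (hF : adapted n L p v) :
  [/\ (* (i) *)
      (forall (R : comPzRingType) (a : nat -> R),
         (exists b : R, b * \sum_(j < n) a j = 1) ->
         U1t_welldef n L p v a /\ U1t_injective n L p v a),
      (* (ii) *)
      (forall (R : idomainType) (a : nat -> R),
         (exists b : R, b * \sum_(j < n) a j = 1) ->
         [/\ U1t_welldef n L p v a, U1t_injective n L p v a
           & U1t_surjective n L p v a]) &
      (* (iii) *)
      (forall (R : comPzRingType) (a : nat -> R),
         (exists b : R, b * \sum_(j < n) a j = 1) ->
         (forall k, is_band n L k -> resonant n L p a k) ->
         [/\ U1t_welldef n L p v a, U1t_injective n L p v a
           & U1t_surjective n L p v a])].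
Proof.
have WD R a := @U1t_welldef_adapted _ _ _ _ _ R a hF.
have SURJ R a b := @U1t_surjective_adapted _ _ _ _ _ R a b hF.
split=> R a [b hb] => [|| hres].
- by split; [exact: WD | exact: U1t_injective_unit hb].
- split; [exact: WD | exact: U1t_injective_unit hb |].
  by apply: (SURJ R a b hb) => k hk hnr; apply/rregP/eqP => h0; apply: hnr.
- split; [exact: WD | exact: U1t_injective_unit hb |].
  by apply: (SURJ R a b hb) => k /hres.
Qed.
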